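(* Let $A$ be a differential $K$-algebra without exponents nor logarithm and let $M$ be a regular singular differential module over $A$ of rank $n$. If $G$ and $G'$ are matrices of the connection of $M$ in two $A$-bases of $M$, both with all entries in $K$, then the multisets of eigenvalues (with multiplicity) of $G$ and $G'$ have the same image in $K/\mathbb{Z}$. Consequently this image multiset (the multiset of exponents $\mathrm{Exp}(M)\subset K/\mathbb{Z}$) is an isomorphism invariant of $M$.
   Context: $K$ is an algebraically closed field of characteristic $0$. $K[t^K]$ is the group algebra over $K$ of $(K,+)$, with $K$-basis $t^a$ ($a\in K$), $t^at^b=t^{a+b}$; $K[t,t^{-1}]$ is identified with the span of $t^n$, $n\in\mathbb{Z}$. Fix a set $\widetilde{K/\mathbb{Z}}\subset K$ of representatives of $K/\mathbb{Z}$ with $0\in\widetilde{K/\mathbb{Z}}$. $A$ is a commutative ring with unit containing $K[t,t^{-1}]$ as a subring, with a derivation $\partial$ extending $t\frac{d}{dt}$. $A[t^K]:=A\otimes_{K[t,t^{-1}]}K[t^K]$, $E_A:=A[t^K][\ell]$ ($\ell$ an indeterminate), with derivation $\partial$ extending that of $A$, $\partial(t^a)=at^a$, $\partial(\ell)=1$. $A$ is a differential $K$-algebra without exponents nor logarithm if $\{f\in A:\partial^2 f=0\}=K$ and, for every $a\in\widetilde{K/\mathbb{Z}}\setminus\{0\}$, $\partial f+af=0$ ($f\in A$) implies $f=0$. A differential module over a differential ring $(B,\partial)$ is a $B$-module $M$ with additive $\nabla$ satisfying $\nabla(fm)=\partial(f)m+f\nabla(m)$; it is trivial if isomorphic to a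 direct sum of copies of $(B,\partial)$. If $M$ is free with basis $b_1,\dots,b_n$ and $\nabla(b_i)=\sum_j g_{j,i}b_j$, the matrix of the connection in this basis is $G=(g_{i,j})$. $M$ is regular singular if $M$ is finite free over $A$ and $M\otimes_AE_A$ (connection $\nabla\otimes1+1\otimes\partial$) is trivial as a differential module over $E_A$. *)

From HB Require Import structures.
From mathcomp Require Import all_boot all_order all_algebra.
Set Implicit Arguments.
Unset Strict Implicit.
Unset Printing Implicit Defensive.
Import Order.TTheory GRing.Theory Num.Theory.
Local Open Scope ring_scope.

Section Setting.
Variables (K : fieldType) (A : comAlgType K).

Definition tpow (t ti : A) (n : int) : A :=
  match n with Posz m => t ^+ m | Negz m => ti ^+ m.+1 end.

(* K[t,t^{-1}] is a subring of A: t is a unit (inverse ti) and the map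
   K[t,t^{-1}] -> A is injective (equivalently: t is transcendental over K). *)
Definition laurent_subring (t ti : A) : Prop :=
  t * ti = 1 /\
  forall p : {poly K}, (map_poly (in_alg A) p).[t] = 0 -> p = 0.

Definition derivation_ext (t : A) (d : A -> A) : Prop :=
  [/\ forall x y, d (x + y) = d x + d y,
      forall x y, d (x * y) = d x * y + x * d y,
      forall c : K, d (c%:A) = 0
    & d t = t].

(* A fixed set of representatives of K/Z containing 0, given by the map
   rep : K -> K sending x to the representative of x + Z, together with
   ip : K -> int with x = rep x + ip x. *)
Definition reps_KZ (rep : K -> K) (ip : K -> int) : Prop :=
  [/\ forall x, x = rep x + (ip x)%:~R,
      forall x (z : int), rep (x + z%:~R) = rep x
    & rep 0 = 0].

Definition no_exp_no_log (rep : K -> K) (d : A -> A) : Prop :=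
  (forall f : A, d (d f) = 0 <-> exists c : K, f = c%:A) /\
  (forall (a : K) (f : A), rep a = a -> a != 0 -> d f + a *: f = 0 -> f = 0).

(* E_A = A[t^K][l].  Since A[t^K] = A (x)_{K[t,t^-1]} K[t^K] is free   *)
(* over A with basis the t^c, c a representative, E_A is presented as  *)
(* formal sums  sum_i p_i t^{a_i}  (p_i in A[l] = {poly A}, a_i in K)  *)
(* modulo the relations t^{c+n} = t^n t^c  (n in Z).  Two formal sums  *)
(* are equal in E_A iff their coefficients on each t^c agree.          *)

Definition Esum := seq (K * {poly A}).

Section E.
Variables (t ti : A) (d : A -> A) (rep : K -> K) (ip : K -> int).

Definition Ecoef (e : Esum) (c : K) : {poly A} :=
  \sum_(x <- e | rep x.1 == c) (tpow t ti (ip x.1))%:P * x.2.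

Definition Eeq (e1 e2 : Esum) : Prop := forall c, Ecoef e1 c = Ecoef e2 c.

Definition Eadd (e1 e2 : Esum) : Esum := e1 ++ e2.
Definition Emul (e1 e2 : Esum) : Esum :=
  [seq (x.1 + y.1, x.2 * y.2) | x <- e1, y <- e2].
Definition Ezero : Esum := [::].
Definition Eone : Esum := [:: (0, 1)].
Definition EofA (f : A) : Esum := [:: (0, f%:P)].

(* derivation on A[l]: d on coefficients, d l = 1 *)
Definition polyder (p : {poly A}) : {poly A} := map_poly d p + p^`().
Definition Eder (e : Esum) : Esum :=
  [seq (x.1, polyder x.2 + (x.1%:A)%:P * x.2) | x <- e].

Definition Emx n := 'I_n -> 'I_n -> Esum.
Definition Emxmul n (X Y : Emx n) : Emx n :=
  fun i j => foldr Eadd Ezero [seq Emul (X i k) (Y k j) | k <- enum 'I_n].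
Definition Emx_eq n (X Y : Emx n) : Prop := forall i j, Eeq (X i j) (Y i j).
Definition Emx1 n : Emx n := fun i j => if i == j then Eone else Ezero.

(* The differential module E_A^n with connection matrix G (entries in A):
   nabla(sum_i y_i e_i) = sum_i d(y_i) e_i + sum_i y_i sum_j G j i e_j.
   It is trivial iff it has a basis of horizontal elements, i.e. there is
   an invertible matrix Y over E_A with  d Y + G Y = 0 . *)
Definition Etrivial n (G : 'M[A]_n) : Prop :=
  exists Y Z : Emx n,
    [/\ Emx_eq (Emxmul Y Z) (@Emx1 n),
        Emx_eq (Emxmul Z Y) (@Emx1 n)
      & forall j k,
          Eeq (Eadd (Eder (Y j k))
                    (foldr Eadd Ezero [seq Emul (EofA (G j i)) (Y i k) | i <- enum 'I_n]))
              Ezero].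
End E.

Definition diff_module (M : lmodType A) (d : A -> A) (nabla : M -> M) : Prop :=
  (forall x y, nabla (x + y) = nabla x + nabla y) /\
  (forall (f : A) (m : M), nabla (f *: m) = d f *: m + f *: nabla m).

Definition is_basis (M : lmodType A) n (b : 'I_n -> M) : Prop :=
  (forall m : M, exists c : 'I_n -> A, m = \sum_i c i *: b i) /\
  (forall c : 'I_n -> A, \sum_i c i *: b i = 0 -> forall i, c i = 0).

Definition conn_matrix (M : lmodType A) n (nabla : M -> M) (b : 'I_n -> M)
  (G : 'M[A]_n) : Prop :=
  forall i, nabla (b i) = \sum_j G j i *: b j.

(* M is regular singular: M is finite free over A and M (x)_A E_A is trivial;
   via a basis b of M, M (x)_A E_A is identified with E_A^n with connection
   matrix the matrix of nabla in b. *)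
Definition regular_singular (t ti : A) (d : A -> A) (rep : K -> K) (ip : K -> int)
  (M : lmodType A) (nabla : M -> M) : Prop :=
  exists n (b : 'I_n -> M) (G : 'M[A]_n),
    [/\ is_basis b, conn_matrix nabla b G & Etrivial t ti d rep ip G].

End Setting.

(* Let P be the matrix of b' in the basis b: it is invertible and d P = P G' - G P.
   Fix a class c of K/Z, let q (resp. r) be the product of the X - x over the roots x of
   char_poly G lying in c (resp. outside c), and q', r' likewise for G'.  The matrix
   q(G) P r'(G') satisfies the same equation, is killed by r(G) on the left and by q'(G')
   on the right, and the roots of r and q' never differ by an integer; peeling off these
   roots one at a time reduces its vanishing to that of an f in A with d f = nu f, nu not
   in Z, which holds because t^m f solves d g + a g = 0 for a suitable nonzero
   representative a.  With the Bezout projectors E = (v r)(G) and E' = (v' r')(G') onto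
   the class c this yields E P = P E', hence det (1 + E) = det (1 + E'), that is
   2 ^ (multiplicity of c in G) = 2 ^ (multiplicity of c in G'). *)

From HB Require Import structures.
From mathcomp Require Import all_boot all_order all_algebra.
Import GRing.Theory.
Local Open Scope ring_scope.
Set Implicit Arguments.
Unset Strict Implicit.

Section Derivation.
Variables (K : fieldType) (A : comAlgType K) (t : A) (d : A -> A).
Hypothesis hd : derivation_ext t d.

Lemma derD x y : d (x + y) = d x + d y. Proof. by case: hd. Qed.
Lemma derM x y : d (x * y) = d x * y + x * d y. Proof. by case: hd. Qed.
Lemma der_alg (c : K) : d c%:A = 0. Proof. by case: hd. Qed.
Lemma der_t : d t = t. Proof. by case: hd. Qed.

Lemma der1 : d 1 = 0. Proof. by rewrite -(scale1r 1) der_alg. Qed.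

Lemma der0 : d 0 = 0. Proof. by rewrite -[in d _](scale0r (1 : A)) der_alg. Qed.

Lemma der_sum I (r : seq I) (P : pred I) (F : I -> A) :
  d (\sum_(i <- r | P i) F i) = \sum_(i <- r | P i) d (F i).
Proof. exact: (big_morph d derD der0). Qed.

Lemma derX x (c : K) k : d x = c *: x -> d (x ^+ k) = (c *+ k) *: x ^+ k.
Proof.
move=> dx; elim: k => [|k IHk]; first by rewrite expr0 der1 mulr0n scale0r.
by rewrite exprS derM IHk dx -scalerAl -scalerAr -scalerDl mulrS.
Qed.

Variable ti : A.
Hypothesis tK : t * ti = 1.

Lemma der_ti : d ti = - ti.
Proof.
have : d (t * ti) = 0 by rewrite tK der1.
rewrite derM der_t tK => /eqP; rewrite addrC addr_eq0 => /eqP tdti.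
by rewrite -[d ti]mul1r -tK (mulrC t) -mulrA tdti mulrN1.
Qed.

Lemma unit_der_int (m : int) : exists u v : A, u * v = 1 /\ d u = m%:~R *: u.
Proof.
case: m => k.
  exists (t ^+ k), (ti ^+ k); rewrite -exprMn tK expr1n.
  by rewrite (@derX t 1) ?scale1r ?der_t // pmulrn.
exists (ti ^+ k.+1), (t ^+ k.+1); rewrite -exprMn mulrC tK expr1n.
by rewrite (@derX ti (-1)) ?der_ti ?scaleN1r // NegzE mulrNz mulNrn.
Qed.

Definition nonint (nu : K) : Prop := forall z : int, nu != z%:~R.

Variables (rep : K -> K) (ip : K -> int).
Hypothesis hrep : reps_KZ rep ip.
Hypothesis hA : no_exp_no_log rep d.

(* Write -nu = a + m with a a representative; then g = t^m f solves d g + a g = 0. *)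
Lemma der_eigen_nonint_eq0 (nu : K) (f : A) :
  nonint nu -> d f = nu *: f -> f = 0.
Proof.
move=> nu_nonint df; case: hrep => rep_ip rep_shift _.
set a := rep (- nu); set m := ip (- nu).
have nuE : - nu = a + m%:~R by exact: rep_ip.
have [u [v [uv du]]] := unit_der_int m.
have a_rep : rep a = a by rewrite -[in LHS](rep_shift a m) -nuE.
have a_neq0 : a != 0.
  by apply: contra (nu_nonint (- m)) => /eqP a0; rewrite mulrNz -[nu]opprK nuE a0 add0r.
have : d (u * f) + a *: (u * f) = 0.
  rewrite derM du df -scalerAl -scalerAr -!scalerDl.
  by rewrite (addrC _ a) addrA -nuE addNr scale0r.
move/(proj2 hA a (u * f) a_rep a_neq0) => uf0.
by rewrite -[f]mul1r -uv (mulrC u) -mulrA uf0 mulr0.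
Qed.

End Derivation.

Section MatrixDerivation.
Variables (K : fieldType) (A : comAlgType K) (t : A) (d : A -> A).
Hypothesis hd : derivation_ext t d.

Definition deriv_mx m n (X : 'M[A]_(m, n)) := map_mx d X.
Local Notation cst M := (map_mx (in_alg A) M).

Lemma deriv_mxM m n p (X : 'M[A]_(m, n)) (Y : 'M[A]_(n, p)) :
  deriv_mx (X *m Y) = deriv_mx X *m Y + X *m deriv_mx Y.
Proof.
apply/matrixP=> i j; rewrite !mxE (der_sum hd) -big_split /=.
by apply: eq_bigr => k _; rewrite (derM hd) !mxE.
Qed.

Lemma deriv_mx_alg m n (C : 'M[K]_(m, n)) : deriv_mx (cst C) = 0.
Proof. by apply/matrixP=> i j; rewrite !mxE (der_alg hd). Qed.

Lemma deriv_mx_algM m n p (C : 'M[K]_(m, n)) (Y : 'M[A]_(n, p)) :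
  deriv_mx (cst C *m Y) = cst C *m deriv_mx Y.
Proof. by rewrite deriv_mxM deriv_mx_alg mul0mx add0r. Qed.

Lemma deriv_mxM_alg m n p (C : 'M[K]_(n, p)) (Y : 'M[A]_(m, n)) :
  deriv_mx (Y *m cst C) = deriv_mx Y *m cst C.
Proof. by rewrite deriv_mxM deriv_mx_alg mulmx0 addr0. Qed.

Hypothesis nonint_eigen_eq0 :
  forall (nu : K) (f : A), nonint nu -> d f = nu *: f -> f = 0.

(* For p = ('X - la) p1, Z := p1(G) Y is again a solution and G Z = la Z, so the entries
   of Z are eigenvectors of d for the non-integer mu - la; hence Z = 0 and induction applies. *)
Lemma horner_killed_solution_eq0 n m (G : 'M[K]_n.+1) (mu : K) (l : seq K)
    (Y : 'M[A]_(n.+1, m)) :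
  (forall la, la \in l -> nonint (mu - la)) ->
  deriv_mx Y = cst (mu%:M - G) *m Y ->
  cst (horner_mx G (\prod_(la <- l) ('X - la%:P))) *m Y = 0 -> Y = 0.
Proof.
elim: l => [|la l IHl] l_nonint dY; first by rewrite big_nil rmorph1 map_mx1 mul1mx.
rewrite big_cons rmorphM /= rmorphB /= horner_mx_X horner_mx_C => killY.
apply: IHl => // [x lx|]; first by apply: l_nonint; rewrite inE lx orbT.
set H := horner_mx G _ in killY *; set Z := cst H *m Y.
have GZ : cst (G - la%:M) *m Z = 0 by rewrite mulmxA -map_mxM -killY mulmxE.
have HG : (mu%:M - G) *m H = H *m (mu%:M - G).
  have -> : mu%:M - G = horner_mx G (mu%:P - 'X).
    by rewrite rmorphB /= horner_mx_C horner_mx_X.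
  exact: comm_horner_mx2.
have dZ : deriv_mx Z = (mu - la)%:A *: Z.
  rewrite deriv_mx_algM dY mulmxA -map_mxM -HG map_mxM -mulmxA.
  have -> : mu%:M - G = (mu - la)%:M - (G - la%:M).
    by rewrite raddfB /= opprB addrA subrK.
  by rewrite map_mxB mulmxBl GZ subr0 map_scalar_mx mul_scalar_mx.
clearbody Z; apply/matrixP=> i j; rewrite [RHS]mxE.
apply: (nonint_eigen_eq0 (l_nonint la (mem_head _ _))).
by move/matrixP: dZ => /(_ i j); rewrite !mxE mulr_algl.
Qed.

(* For p' = ('X - mu) p1', Y := X p1'(G') satisfies Y G' = mu Y, so it solves
   d Y = (mu - G) Y and the previous lemma kills it; induction on p'. *)
Lemma intertwiner_eq0 n (G G' : 'M[K]_n.+1) (l l' : seq K) (X : 'M[A]_n.+1) :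
  (forall la mu, la \in l -> mu \in l' -> nonint (mu - la)) ->
  deriv_mx X = X *m cst G' - cst G *m X ->
  cst (horner_mx G (\prod_(la <- l) ('X - la%:P))) *m X = 0 ->
  X *m cst (horner_mx G' (\prod_(mu <- l') ('X - mu%:P))) = 0 -> X = 0.
Proof.
move=> ll'_nonint dX killX; elim: l' ll'_nonint => [|mu l' IHl'] ll'_nonint.
  by rewrite big_nil rmorph1 map_mx1 mulmx1.
rewrite big_cons mulrC rmorphM /= rmorphB /= horner_mx_X horner_mx_C => killX'.
apply: IHl' => [la x la_l x_l'|]; first by apply: ll'_nonint; rewrite // inE x_l' orbT.
set H := horner_mx G' _ in killX' *; set Y := X *m cst H.
have YG' : Y *m cst G' = mu%:A *: Y.
  have -> : mu%:A *: Y = Y *m cst mu%:M by rewrite map_scalar_mx mul_mx_scalar.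
  apply/eqP; rewrite -subr_eq0 -mulmxBr -map_mxB.
  by rewrite -mulmxA -map_mxM -killX' mulmxE.
have HG' : H *m G' = G' *m H.
  by rewrite -[G' in LHS](horner_mx_X G') -[G' in RHS](horner_mx_X G')
    mulmxE comm_horner_mx2.
apply: (@horner_killed_solution_eq0 n n.+1 G mu l).
- by move=> la la_l; apply: ll'_nonint => //; exact: mem_head.
- rewrite deriv_mxM_alg dX mulmxBl -mulmxA -map_mxM -HG' map_mxM mulmxA -/Y YG'.
  by rewrite map_mxB mulmxBl map_scalar_mx mul_scalar_mx -!mulmxA.
- by rewrite mulmxA killX mul0mx.
Qed.

End MatrixDerivation.

Lemma prodr_const_seq (R : comNzRingType) (I : Type) (r : seq I) (c : R) :
  \prod_(i <- r) c = c ^+ size r.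
Proof. by rewrite big_const_seq count_predT iter_mulr_1. Qed.

Lemma horner_char_poly (R : comNzRingType) n (G : 'M[R]_n) (z : R) :
  (char_poly G).[z] = \det (z%:M - G).
Proof.
rewrite /char_poly -horner_evalE -det_map_mx; congr (\det _).
apply/matrixP=> i j; rewrite !mxE.
change (('X *+ (i == j) - (G i j)%:P).[z] = z *+ (i == j) - G i j).
by case: (i == j); rewrite ?mulr1n ?mulr0n !hornerE.
Qed.

Lemma size_char_poly_prod (R : idomainType) n (G : 'M[R]_n) (s : seq R) :
  char_poly G = \prod_(x <- s) ('X - x%:P) -> size s = n.
Proof. by move=> Gs; move: (size_char_poly G); rewrite Gs size_prod_XsubC => -[]. Qed.

Lemma det_horner_mx (K : closedFieldType) n (G : 'M[K]_n.+1) (s : seq K) (p : {poly K}) :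
  char_poly G = \prod_(x <- s) ('X - x%:P) ->
  \det (horner_mx G p) = \prod_(x <- s) p.[x].
Proof.
move=> Gs; have size_s := size_char_poly_prod Gs.
have det_subr z : \det (G - z%:M) = \prod_(x <- s) (x - z).
  rewrite -opprB -scaleN1r detZ -horner_char_poly Gs horner_prod.
  rewrite [RHS](eq_bigr (fun x => -1 * (z - x))) => [|x _]; last by rewrite mulN1r opprB.
  by rewrite big_split /= prodr_const_seq size_s; under eq_bigr do rewrite hornerXsubC.
have [r ->] := closed_field_poly_normal p.
rewrite linearZ /= detZ.
under [RHS]eq_bigr do rewrite hornerZ horner_prod.
rewrite big_split /= prodr_const_seq size_s; congr (_ * _).
rewrite exchange_big /=; elim: r => [|z r IHr]; first by rewrite !big_nil rmorph1 det1.
rewrite !big_cons rmorphM /= -mulmxE det_mulmx IHr rmorphB /= horner_mx_X horner_mx_C.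
by rewrite det_subr; under [in RHS]eq_bigr do rewrite hornerXsubC.
Qed.

Lemma natr_inj_pchar0 (R : idomainType) :
  [pchar R] =i pred0 -> injective (fun n : nat => n%:R : R).
Proof.
move/pcharf0P => natr_eq0 m n; wlog le_mn : m n / (m <= n)%N => [W mn|].
  by case/orP: (leq_total m n) => /W; [apply | move/(_ (esym mn))].
rewrite /= -(subnKC le_mn) natrD -{1}[m%:R]addr0 => /addrI /esym /eqP.
by rewrite natr_eq0 => /eqP ->; rewrite addn0.
Qed.

Lemma bezout_prod_XsubC_predC (K : closedFieldType) (s : seq K) (S : pred K) :
  exists u v : {poly K},
    u * \prod_(x <- s | S x) ('X - x%:P) + v * \prod_(x <- s | predC S x) ('X - x%:P) = 1.
Proof.
suff /Bezout_eq1_coprimepP [[u v] uv1] :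
    coprimep (\prod_(x <- s | S x) ('X - x%:P)) (\prod_(x <- s | predC S x) ('X - x%:P)).
  by exists u, v.
apply: contraT; rewrite /coprimep => /closed_rootP [x].
rewrite root_gcd -(big_filter _ S) -(big_filter _ (predC S)) !root_prod_XsubC.
by rewrite !mem_filter /= => /and3P [/andP [->]].
Qed.

Lemma horner_mx_prod_predC_eq0 (K : fieldType) n (G : 'M[K]_n.+1) (s : seq K) (S : pred K) :
  char_poly G = \prod_(x <- s) ('X - x%:P) ->
  horner_mx G (\prod_(x <- s | S x) ('X - x%:P)) *
  horner_mx G (\prod_(x <- s | predC S x) ('X - x%:P)) = 0.
Proof. by move=> Gs; rewrite -rmorphM /= -(bigID S predT) -Gs Cayley_Hamilton. Qed.

Lemma horner_bezout_idempotent (K : fieldType) (s : seq K) (S : pred K) (u v : {poly K}) :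
  u * \prod_(x <- s | S x) ('X - x%:P) + v * \prod_(x <- s | predC S x) ('X - x%:P) = 1 ->
  {in s, forall x, (1 + v * \prod_(x <- s | predC S x) ('X - x%:P)).[x] = if S x then 2 else 1}.
Proof.
move=> uv1 x s_x; have root_part (T : pred K) : T x -> (\prod_(y <- s | T y) ('X - y%:P)).[x] = 0.
  by move=> Tx; apply/rootP; rewrite -big_filter root_prod_XsubC mem_filter Tx.
have /(congr1 (horner^~ x)) := uv1; rewrite hornerD !hornerM hornerC hornerD hornerC hornerM.
case: ifP => [/(root_part S)-> | /negbT /(root_part (predC S))->].
  by rewrite mulr0 add0r => ->.
by rewrite !mulr0 !addr0.
Qed.

Lemma det_intertwined (R : comNzRingType) n (P Q X Y : 'M[R]_n) :
  P *m Q = 1%:M -> X *m P = P *m Y -> \det X = \det Y.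
Proof.
move=> PQ1 XPY; have detPQ : \det P * \det Q = 1 by rewrite -det_mulmx PQ1 det1.
have /(congr1 (fun M => \det M * \det Q)) := XPY.
by rewrite !det_mulmx -!mulrA detPQ mulr1 mulrCA detPQ mulr1.
Qed.

Section ExponentClasses.
Variables (K : closedFieldType) (A : comAlgType K) (t : A) (d : A -> A).
Hypothesis hd : derivation_ext t d.
Hypothesis nonint_eigen_eq0 :
  forall (nu : K) (f : A), nonint nu -> d f = nu *: f -> f = 0.
Variable n : nat.

Local Notation cst M := (map_mx (in_alg A) M).
Local Notation part s S := (\prod_(x <- s | S x) ('X - x%:P)).

Lemma comm_horner_mx_alg (H : 'M[K]_n.+1) (p q : {poly K}) :
  cst (horner_mx H p) *m cst (horner_mx H q) = cst (horner_mx H q) *m cst (horner_mx H p).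
Proof. by rewrite -!map_mxM !mulmxE comm_horner_mx2. Qed.

Lemma det_one_add_bezout_idempotent (G : 'M[K]_n.+1) (s : seq K) (S : pred K)
    (u v : {poly K}) :
  char_poly G = \prod_(x <- s) ('X - x%:P) ->
  u * part s S + v * part s (predC S) = 1 ->
  \det (1 + horner_mx G (v * part s (predC S))) = 2 ^+ count S s.
Proof.
move=> Gs uv1; rewrite -[X in X + _](rmorph1 (horner_mx G)) -rmorphD (det_horner_mx _ Gs).
rewrite (eq_big_seq (fun x => if S x then 2 else 1)); last exact: horner_bezout_idempotent uv1.
by rewrite -big_mkcond big_const_seq iter_mulr_1.
Qed.

Variables (G G' : 'M[K]_n.+1) (s s' : seq K).
Hypotheses (Gs : char_poly G = \prod_(x <- s) ('X - x%:P))
  (G's' : char_poly G' = \prod_(x <- s') ('X - x%:P)).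
Variable P : 'M[A]_n.+1.
Hypothesis dP : deriv_mx d P = P *m cst G' - cst G *m P.

Lemma intertwiner_class_eq0 (S : pred K) :
  (forall y (z : int), S (y + z%:~R) = S y) ->
  cst (horner_mx G (part s S)) *m P *m cst (horner_mx G' (part s' (predC S))) = 0.
Proof.
move=> S_shift; set L := horner_mx G _; set R := horner_mx G' _.
apply: (intertwiner_eq0 hd nonint_eigen_eq0 (l := [seq x <- s | predC S x])
  (l' := [seq x <- s' | S x])).
- move=> la mu; rewrite !mem_filter => /andP[Sla _] /andP[Smu _] z.
  by apply: contra Sla => /eqP muE; rewrite -(S_shift la z) -muE addrC subrK.
- have LG : cst L *m cst G = cst G *m cst L.
    by rewrite -[in cst G](horner_mx_X G) comm_horner_mx_alg.
  have G'R : cst G' *m cst R = cst R *m cst G'.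
    by rewrite -[in cst G'](horner_mx_X G') comm_horner_mx_alg.
  rewrite (deriv_mxM_alg hd) (deriv_mx_algM hd) dP mulmxBr mulmxBl.
  by rewrite -!mulmxA G'R !mulmxA LG.
- rewrite big_filter !mulmxA -map_mxM [in horner_mx _ _ *m _]mulmxE comm_horner_mx2.
  by rewrite (horner_mx_prod_predC_eq0 _ Gs) map_mx0 !mul0mx.
- rewrite big_filter -!mulmxA -map_mxM [in horner_mx _ _ *m _]mulmxE comm_horner_mx2.
  by rewrite (horner_mx_prod_predC_eq0 S G's') map_mx0 !mulmx0.
Qed.

(* E = (v r)(G) and E' = (v' r')(G') are the spectral projectors on the class S; the
   vanishing of the off-diagonal blocks E P (1 - E') and (1 - E) P E' gives E P = P E'. *)
Lemma bezout_idempotent_intertwined (S : pred K) (u v u' v' : {poly K}) :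
  (forall y (z : int), S (y + z%:~R) = S y) ->
  u * part s S + v * part s (predC S) = 1 ->
  u' * part s' S + v' * part s' (predC S) = 1 ->
  cst (horner_mx G (v * part s (predC S))) *m P =
  P *m cst (horner_mx G' (v' * part s' (predC S))).
Proof.
move=> S_shift uv1 uv1'.
have offdiag1 := intertwiner_class_eq0 S_shift.
have offdiag2 : cst (horner_mx G (part s (predC S))) *m P *m cst (horner_mx G' (part s' S)) = 0.
  have predC_shift y (z : int) : predC S (y + z%:~R) = predC S y by rewrite /= S_shift.
  move: (intertwiner_class_eq0 predC_shift).
  by rewrite [X in cst (horner_mx G' X)](eq_bigl S) // => x; rewrite /= negbK.
have proj_compl (H : 'M[K]_n.+1) (s0 : seq K) (a b : {poly K}) :
    a * part s0 S + b * part s0 (predC S) = 1 ->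
    1%:M - horner_mx H (b * part s0 (predC S)) = horner_mx H (a * part s0 S).
  by move=> ab1; rewrite -[1%:M](rmorph1 (horner_mx H)) -rmorphB -{1}ab1 addrK.
have E1 : cst (horner_mx G (v * part s (predC S))) *m P *m
    (1%:M - cst (horner_mx G' (v' * part s' (predC S)))) = 0.
  rewrite -(map_mx1 (in_alg A)) -map_mxB (proj_compl _ _ _ _ uv1') (mulrC u') !rmorphM -!mulmxE.
  by rewrite !mulmxA -2!(mulmxA (cst (horner_mx G v))) offdiag2 mulmx0 mul0mx.
have E2 : (1%:M - cst (horner_mx G (v * part s (predC S)))) *m P *m
    cst (horner_mx G' (v' * part s' (predC S))) = 0.
  rewrite -(map_mx1 (in_alg A)) -map_mxB (proj_compl _ _ _ _ uv1) (mulrC v') !rmorphM -!mulmxE.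
  by rewrite !mulmxA -2!(mulmxA (cst (horner_mx G u))) offdiag1 mulmx0 mul0mx.
move/eqP: E1; rewrite mulmxBr mulmx1 subr_eq0 => /eqP ->.
by move/eqP: E2; rewrite !mulmxBl mul1mx subr_eq0 => /eqP.
Qed.

Lemma count_class_intertwined (Q : 'M[A]_n.+1) (S : pred K) :
  [pchar K] =i pred0 -> P *m Q = 1%:M ->
  (forall y (z : int), S (y + z%:~R) = S y) -> count S s = count S s'.
Proof.
move=> K0 PQ1 S_shift.
have [u [v uv1]] := bezout_prod_XsubC_predC s S.
have [u' [v' uv1']] := bezout_prod_XsubC_predC s' S.
apply: (@expnI 2) => //; apply: (natr_inj_pchar0 K0); rewrite /= !natrX.
rewrite -(det_one_add_bezout_idempotent Gs uv1) -(det_one_add_bezout_idempotent G's' uv1').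
apply: (fmorph_inj (in_alg A)); rewrite -!det_map_mx; apply: (det_intertwined PQ1).
rewrite !rmorphD !rmorph1 mulmxDl mulmxDr mul1mx mulmx1.
by rewrite (bezout_idempotent_intertwined S_shift uv1 uv1').
Qed.

End ExponentClasses.

Section BasisChange.
Variables (K : fieldType) (A : comAlgType K) (d : A -> A) (M : lmodType A).
Variable n : nat.
Implicit Types (b : 'I_n -> M) (X Y : 'M[A]_n).

Lemma basis_coord_inj b (c c' : 'I_n -> A) :
  is_basis b -> \sum_i c i *: b i = \sum_i c' i *: b i -> c =1 c'.
Proof.
move=> [_ b_free] cc' i; apply/eqP; rewrite -subr_eq0; apply/eqP.
apply: (b_free (fun i => c i - c' i)).
by under eq_bigr do rewrite scalerBl; rewrite sumrB cc' subrr.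
Qed.

Lemma sum_coord_mulmx b X Y i :
  \sum_k Y k i *: \sum_j X j k *: b j = \sum_j (X *m Y) j i *: b j.
Proof.
under eq_bigr do rewrite scaler_sumr.
rewrite exchange_big /=; apply: eq_bigr => j _.
by rewrite mxE scaler_suml; apply: eq_bigr => k _; rewrite scalerA mulrC.
Qed.

Lemma sum_coord_mx1 b i : \sum_j (1%:M : 'M[A]_n) j i *: b j = b i.
Proof.
rewrite (bigD1 i) //= big1 ?addr0 => [|j ji]; first by rewrite mxE eqxx scale1r.
by rewrite mxE (negbTE ji) scale0r.
Qed.

Lemma coord_mx b b' : is_basis b -> exists X, forall i, b' i = \sum_j X j i *: b j.
Proof.
move=> [b_span _]; have [c bc] := fin_all_exists (fun i => b_span (b' i)).
by exists (\matrix_(j, i) c i j) => i; under eq_bigr do rewrite mxE.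
Qed.

Lemma coord_mx_mul_eq1 b b' X Y :
  is_basis b -> (forall i, b' i = \sum_j X j i *: b j) ->
  (forall i, b i = \sum_j Y j i *: b' j) -> X *m Y = 1%:M.
Proof.
move=> hb bX b'Y; apply/matrixP=> j i; move: j; apply: basis_coord_inj hb _.
by rewrite sum_coord_mx1 -sum_coord_mulmx b'Y; under [RHS]eq_bigr do rewrite bX.
Qed.

Variable nabla : M -> M.
Hypothesis hM : diff_module d nabla.

Lemma nabla_sum I (r : seq I) (F : I -> M) :
  nabla (\sum_(i <- r) F i) = \sum_(i <- r) nabla (F i).
Proof.
have nabla0 : nabla 0 = 0.
  by apply: (addrI (nabla 0)); rewrite -(proj1 hM) !addr0.
exact: (big_morph nabla (proj1 hM) nabla0).
Qed.

(* The gauge transformation rule G' = P^-1 G P + P^-1 d P, written without inverses. *)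
Lemma deriv_coord_mx b b' X G G' :
  is_basis b -> (forall i, b' i = \sum_j X j i *: b j) ->
  conn_matrix nabla b G -> conn_matrix nabla b' G' ->
  deriv_mx d X = X *m G' - G *m X.
Proof.
move=> hb bX hG hG'; apply/matrixP=> j i.
suff coordE : \sum_j (deriv_mx d X j i + (G *m X) j i) *: b j = \sum_j (X *m G') j i *: b j.
  by rewrite -(addrK ((G *m X) j i) (deriv_mx d X j i)) (basis_coord_inj hb coordE j) !mxE.
rewrite -sum_coord_mulmx; under [RHS]eq_bigr do rewrite -bX.
rewrite -hG' bX nabla_sum.
under [RHS]eq_bigr do rewrite (proj2 hM) hG.
rewrite [RHS]big_split /= sum_coord_mulmx.
under eq_bigr do rewrite scalerDl.
by rewrite big_split /=; under eq_bigr do rewrite /deriv_mx mxE.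
Qed.
End BasisChange.

Theorem mainTheorem15
  (K : closedFieldType) (hK : [pchar K] =i pred0)
  (rep : K -> K) (ip : K -> int) (hrep : reps_KZ rep ip)
  (A : comAlgType K) (t ti : A) (d : A -> A)
  (hL : laurent_subring t ti) (hd : derivation_ext t d)
  (hA : no_exp_no_log rep d)
  (M : lmodType A) (nabla : M -> M) (hM : diff_module d nabla)
  (hrs : regular_singular t ti d rep ip nabla)
  (n : nat) (b b' : 'I_n -> M) (hb : is_basis b) (hb' : is_basis b')
  (G G' : 'M[K]_n)
  (hG : conn_matrix nabla b (map_mx (in_alg A) G))
  (hG' : conn_matrix nabla b' (map_mx (in_alg A) G'))
  (s s' : seq K)
  (hs : char_poly G = \prod_(x <- s) ('X - x%:P))
  (hs' : char_poly G' = \prod_(x <- s') ('X - x%:P)) :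
  perm_eq (map rep s) (map rep s').
Proof.
have nonint_eq0 := der_eigen_nonint_eq0 hd (proj1 hL) hrep hA.
have [P b'P] := coord_mx b' hb.
have [Q bQ] := coord_mx b hb'.
have PQ1 := coord_mx_mul_eq1 hb b'P bQ.
have dP := deriv_coord_mx hM hb b'P hG hG'.
apply/permP => a; rewrite !count_map.
case: n => [|m] in b b' hb hb' G G' hG hG' hs hs' P Q b'P bQ PQ1 dP *.
  by rewrite (size0nil (size_char_poly_prod hs)) (size0nil (size_char_poly_prod hs')).
apply: (count_class_intertwined hd nonint_eq0 hs hs' dP (S := preim rep a) hK PQ1) => y z.
by case: hrep => _ rep_shift _; rewrite /= rep_shift.
Qed.
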